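(* Let $p\colon G(J)\to D'(K)$ be a realizable puzzle. Suppose an edge of $G(J)$ colored $v$, with endpoints $\boldsymbol\alpha,\boldsymbol\alpha'$ where $\alpha_v=a$, $\alpha'_v=b$ ($a\ne b$) and $\alpha_i=\alpha'_i$ for $i\ne v$, is trivial, i.e. $p(\boldsymbol\alpha)=p(\boldsymbol\alpha')$. Then every edge parallel to it is trivial: for every $\boldsymbol\beta\in I(J)$ with $\beta_v=a$, letting $\boldsymbol\beta'$ be obtained from $\boldsymbol\beta$ by replacing the $v$-th coordinate by $b$, we have $p(\boldsymbol\beta)=p(\boldsymbol\beta')$.
   Context: Let $R\in\{\mathbb Z,\mathbb Z_2\}$; an $R$-basis of $R^n$ is a $\mathbb Z$-basis of $\mathbb Z^n$ ($R=\mathbb Z$) or a basis of $\mathbb Z_2^n$ ($R=\mathbb Z_2$). $K$ is an $(n-1)$-dimensional star-shaped simplicial sphere on $[m]$. An $R$-characteristic map over a complex with $(N-1)$-dimensional facets is a map from its vertices to $R^N$ sending each $(N-1)$-face to an $R$-basis; D-J equivalence is equality up to left multiplication by $GL_N(R)$. For a face $\sigma$, $\operatorname{proj}_\sigma\lambda$ is the characteristic map on $\operatorname{link}\sigma$ given by $w\mapsto[\lambda(w)]\in R^N/\langle\lambda(u):u\in\sigma\rangle$. For $J=(j_1,\dots,j_m)\in\mathbb Z_{>0}^m$, $K(J)$ is the complex on vertices $\{i_k:1\le i\le m,1\le k\le j_i\}$ whose minimal non-faces are $\bigcup_{i\in\tau}\{i_1,\dots,i_{j_i}\}$ for $\tau$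 a minimal non-face of $K$; $\operatorname{wed}_vK=K(J)$ with $j_v=2$, other $j_i=1$. $I(J)=\{\boldsymbol\alpha:1\le\alpha_i\le j_i\}$; $\sigma(\boldsymbol\alpha)$ is the set of all vertices of $K(J)$ except $1_{\alpha_1},\dots,m_{\alpha_m}$, a face whose link is identified with $K$ via $i_{\alpha_i}\mapsto i$. The pre-diagram $D'(K)$: vertices are D-J classes of $R$-characteristic maps over $K$; an edge colored $v$ joins $\lambda_1,\lambda_2$ iff some $R$-characteristic map $\Lambda$ over $\operatorname{wed}_vK$ has $\operatorname{proj}_{v_1}\Lambda=\lambda_1$, $\operatorname{proj}_{v_2}\Lambda=\lambda_2$ (links of $v_1,v_2$ identified with $K$ by sending the other of $v_1,v_2$ to $v$). $G(J)$ is the $1$-skeleton of $\prod_i\Delta^{j_i-1}$ with vertex set $I(J)$, edges joining vertices differing in exactly one coordinate $v$, colored $v$. A puzzle is a color-preserving graph homomorphism $G(J)\to D'(K)$; it is realizable if it equals $\boldsymbol\alpha\mapsto\operatorname{proj}_{\sigma(\boldsymbol\alpha)}\Lambda$ for some $R$-characteristic map $\Lambda$ over $K(J)$. *)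

From HB Require Import structures.
From Stdlib Require Import Reals.
From mathcomp Require Import all_boot all_order all_algebra.

Set Implicit Arguments.
Unset Strict Implicit.
Unset Printing Implicit Defensive.

Import GRing.Theory.

Inductive coef := CZ | CZ2.

Definition coefR (c : coef) : comUnitRingType :=
  match c with
  | CZ => GRing.ComUnitRing.clone int _
  | CZ2 => GRing.ComUnitRing.clone 'F_2 _
  end.

Definition simplicial_complex (V : finType) (K : {set {set V}}) : Prop :=
  (forall s t : {set V}, s \in K -> t \subset s -> t \in K) /\
  (forall v : V, [set v] \in K).

(* K is (n-1)-dimensional: maximal faces have n vertices. *)
Definition has_dim (V : finType) (K : {set {set V}}) (n : nat) : Prop :=
  (exists s : {set V}, s \in K /\ #|s| = n) /\ (forall s : {set V}, s \in K -> #|s| <= n).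

Definition min_nonface (V : finType) (K : {set {set V}}) (t : {set V}) : Prop :=
  t \notin K /\ (forall s : {set V}, s \proper t -> s \in K).

Definition rsum (m : nat) (f : 'I_m -> R) : R := \big[Rplus/R0]_(i < m) f i.

Definition in_hull (m n : nat) (x : 'I_m -> 'I_n -> R) (s : {set 'I_m})
    (y : 'I_n -> R) : Prop :=
  exists c : 'I_m -> R,
    (forall i, Rle R0 (c i)) /\ (forall i, i \notin s -> c i = R0) /\
    rsum c = R1 /\ (forall k, y k = rsum (fun i => Rmult (c i) (x i k))).

Definition aff_indep (m n : nat) (x : 'I_m -> 'I_n -> R) (s : {set 'I_m}) : Prop :=
  forall c : 'I_m -> R,
    (forall i, i \notin s -> c i = R0) -> rsum c = R0 ->
    (forall k, rsum (fun i => Rmult (c i) (x i k)) = R0) ->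
    forall i, c i = R0.

Definition geom_realization (m n : nat) (K : {set {set 'I_m}})
    (x : 'I_m -> 'I_n -> R) : Prop :=
  (forall s, s \in K -> aff_indep x s) /\
  (forall s t y, s \in K -> t \in K -> in_hull x s y -> in_hull x t y ->
     in_hull x (s :&: t) y).

Definition in_polyhedron (m n : nat) (K : {set {set 'I_m}})
    (x : 'I_m -> 'I_n -> R) (y : 'I_n -> R) : Prop :=
  exists s, s \in K /\ in_hull x s y.

Definition star_shaped_sphere (m n : nat) (K : {set {set 'I_m}}) : Prop :=
  exists (x : 'I_m -> 'I_n -> R) (p : 'I_n -> R),
    geom_realization K x /\
    forall d : 'I_n -> R, (exists k, d k <> R0) ->
      exists t : R, (Rle R0 t /\
         in_polyhedron K x (fun k => Rplus (p k) (Rmult t (d k)))) /\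
        forall t', Rle R0 t' ->
          in_polyhedron K x (fun k => Rplus (p k) (Rmult t' (d k))) -> t' = t.

Local Open Scope ring_scope.

Definition is_basis_on (V : finType) (Rg : comUnitRingType) (N : nat)
    (l : V -> 'rV[Rg]_N) (S : {set V}) : Prop :=
  exists f : 'I_N -> V,
    injective f /\ (forall u, u \in S <-> exists i, f i = u) /\
    (\matrix_(i < N) l (f i)) \in unitmx.

Definition char_map (V : finType) (L : {set V} -> Prop) (Rg : comUnitRingType)
    (N : nat) (l : V -> 'rV[Rg]_N) : Prop :=
  forall S : {set V}, L S -> #|S| = N -> is_basis_on l S.

(* vertices i_k of K(J): i : 'I_m, k : 'I_(J i)  (k = 0..j_i-1 stands for 1..j_i) *)
Definition VJ (m : nat) (J : 'I_m -> nat) : finType := {i : 'I_m & 'I_(J i)}.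

Definition block (m : nat) (J : 'I_m -> nat) (t : {set 'I_m}) : {set VJ J} :=
  [set u : VJ J | tag u \in t].

(* faces of K(J): subsets containing no minimal non-face of K(J) *)
Definition KJ_face (m : nat) (K : {set {set 'I_m}}) (J : 'I_m -> nat)
    (S : {set VJ J}) : Prop :=
  forall t : {set 'I_m}, min_nonface K t -> ~ (block J t \subset S).

(* dimension count: K(J) has facets of size n + sum_i (j_i - 1) *)
Definition NJ (m n : nat) (J : 'I_m -> nat) : nat :=
  (n + \sum_(i < m) (J i).-1)%N.

Definition IJ (m : nat) (J : 'I_m -> nat) : Type := forall i : 'I_m, 'I_(J i).

(* i |-> i_{alpha_i}: identification of K with link sigma(alpha) *)
Definition iota (m : nat) (J : 'I_m -> nat) (a : IJ J) (i : 'I_m) : VJ J :=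
  Tagged (fun i => 'I_(J i)) (a i).

Definition in_sigma (m : nat) (J : 'I_m -> nat) (a : IJ J) (u : VJ J) : bool :=
  tagged u != a (tag u).

(* The realizable puzzle  p(alpha) = [proj_{sigma(alpha)} Lambda]  (a D-J class
   of maps over K, via the identification iota alpha).  A map mu : [m] -> Rg^n
   belongs to this class iff mu = phi o Lambda o iota_alpha for a surjective
   linear phi : Rg^N -> Rg^n whose kernel is the span of Lambda(sigma(alpha)),
   i.e. phi is the quotient map followed by an identification with Rg^n. *)
Definition puzzle (m n : nat) (J : 'I_m -> nat) (c : coef)
    (Lam : VJ J -> 'rV[coefR c]_(NJ n J)) (a : IJ J)
    : ('I_m -> 'rV[coefR c]_n) -> Prop :=
  fun mu => exists phi : 'M[coefR c]_(NJ n J, n),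
    (forall x : 'rV[coefR c]_(NJ n J),
        x *m phi = 0 <->
        exists cf : VJ J -> coefR c,
          x = \sum_(u : VJ J | in_sigma a u) cf u *: Lam u) /\
    (forall y : 'rV[coefR c]_n, exists x, x *m phi = y) /\
    (forall i, mu i = Lam (iota a i) *m phi).

From Pilot Require Import Defs.
From HB Require Import structures.
From Stdlib Require Import Reals.
From mathcomp Require Import all_boot all_order all_algebra.
From mathcomp Require Import Rstruct lra zify.
From Stdlib Require Import FunctionalExtensionality PropExtensionality.

Set Implicit Arguments.
Unset Strict Implicit.
Unset Printing Implicit Defensive.

Import GRing.Theory Num.Theory Order.TTheory.
Local Open Scope ring_scope.

(* Write A and B for the copies v_a and v_b of v in K(J).  Two quotient maps
   realizing the same class p(alpha) = p(alpha') differ by a linear functional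
   f with f(Lam A) = 1, f(Lam B) = -1 and f(Lam u) = 0 for every other vertex
   u; to get f(Lam A) = 1 one reads the difference on the coordinate of the
   image of Lam A, which is a basis vector once v lies in a facet F of K (then
   sigma(alpha) together with the copies of F is a facet of K(J)).  Given f,
   any quotient map phi realizing p(beta) yields phi - f (Lam A phi), which
   kills Lam A instead of Lam B and realizes p(beta') with the same values.
   The facet through v exists because K is a star-shaped sphere: otherwise a
   small perturbation of the direction from the centre to v would give a ray
   meeting no simplex of K. *)

Definition pairing (R : pzRingType) (n : nat) (x : 'rV[R]_n) (f : 'cV[R]_n) : R :=
  (x *m f) 0 0.

Section Pairing.
Variables (R : pzRingType) (n : nat).
Implicit Types (x y : 'rV[R]_n) (f : 'cV[R]_n).

Lemma pairing0l f : pairing 0 f = 0.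
Proof. by rewrite /pairing mul0mx mxE. Qed.

Lemma pairing0r x : pairing x 0 = 0.
Proof. by rewrite /pairing mulmx0 mxE. Qed.

Lemma pairingDl x y f : pairing (x + y) f = pairing x f + pairing y f.
Proof. by rewrite /pairing mulmxDl mxE. Qed.

Lemma pairingBl x y f : pairing (x - y) f = pairing x f - pairing y f.
Proof. by rewrite /pairing mulmxBl !mxE. Qed.

Lemma pairingZl k x f : pairing (k *: x) f = k * pairing x f.
Proof. by rewrite /pairing -scalemxAl mxE. Qed.

Lemma pairingNr x f : pairing x (- f) = - pairing x f.
Proof. by rewrite /pairing mulmxN mxE. Qed.

Lemma pairing_suml (I : Type) (r : seq I) (P : pred I) (F : I -> 'rV[R]_n) f :
  pairing (\sum_(i <- r | P i) F i) f = \sum_(i <- r | P i) pairing (F i) f.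
Proof. by rewrite /pairing mulmx_suml summxE. Qed.

Lemma pairing_mulmx (p : nat) x (M : 'M[R]_(n, p)) (g : 'cV[R]_p) :
  pairing x (M *m g) = pairing (x *m M) g.
Proof. by rewrite /pairing mulmxA. Qed.

Lemma pairing_delta x k : pairing x (delta_mx k 0) = x 0 k.
Proof. by rewrite /pairing -colE mxE. Qed.

Lemma mulmx_pairing (p : nat) x f (Y : 'M[R]_(1, p)) : x *m (f *m Y) = pairing x f *: Y.
Proof. by rewrite mulmxA [x *m f]mx11_scalar mul_scalar_mx. Qed.

End Pairing.

Section KernelRows.
Variables (F : fieldType) (n : nat) (A : 'M[F]_n).

Definition ker_col (k : 'I_n) : 'cV[F]_n := (row k (kermx A^T))^T.

Lemma mulmx_ker_col k : A *m ker_col k = 0.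
Proof.
by apply: trmx_inj; rewrite trmx_mul trmxK trmx0 -row_mul mulmx_ker row0.
Qed.

Lemma nonunitmx_ker_col : A \notin unitmx -> exists k, ker_col k != 0.
Proof.
rewrite -unitmx_tr -row_free_unit -kermx_eq0 => kerA.
apply/existsP; apply: contraR kerA; rewrite negb_exists => /forallP rows0.
apply/eqP/row_matrixP => k; rewrite row0; apply: trmx_inj; rewrite trmx0.
exact/eqP/negbNE/rows0.
Qed.

End KernelRows.

(** * Avoiding finitely many cones *)

Section Perturbation.
Variable R : realFieldType.

Lemma exists_small_pos (I : finType) (a b : I -> R) :
  exists2 e : R, 0 < e & forall j, a j != 0 -> e * `|b j| < `|a j|.
Proof.
pose S := \sum_j `|b j| / `|a j|.
have S_ge0 : 0 <= S by apply: sumr_ge0 => j _; rewrite divr_ge0.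
exists (1 + S)^-1 => [|j aj0]; first by rewrite invr_gt0; lra.
have aj : 0 < `|a j| by rewrite normr_gt0.
have : `|b j| / `|a j| <= S.
  by rewrite /S (bigD1 j) //= lerDl sumr_ge0 // => i _; rewrite divr_ge0.
rewrite ler_pdivrMr // => H; rewrite mulrC ltr_pdivrMr; [nra|lra].
Qed.

Lemma addr_small_lt0 (x y : R) : x < 0 -> `|y| < `|x| -> x + y < 0.
Proof. by move=> x0; rewrite (ltr0_norm x0) => yx; have := ler_norm y; lra. Qed.

Lemma addr_small_neq0 (x y : R) : `|y| < `|x| -> x + y != 0.
Proof. by move=> yx; rewrite addr_eq0; apply: contraTneq yx => ->; rewrite normrN ltxx. Qed.

Lemma pairing_tr_gt0 (n : nat) (z : 'cV[R]_n) : z != 0 -> 0 < pairing z^T z.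
Proof.
have sq_ge0 i : 0 <= z^T 0 i * z i 0 by rewrite mxE -expr2 sqr_ge0.
apply: contraR; rewrite /pairing mxE -leNgt => sum_le0.
have /(psumr_eq0P (fun i _ => sq_ge0 i)) z0 : \sum_i z^T 0 i * z i 0 = 0.
  by apply/eqP; rewrite eq_le sum_le0 sumr_ge0.
apply/eqP/colP => i; have /eqP := z0 i isT.
by rewrite mxE -expr2 sqrf_eq0 mxE => /eqP.
Qed.

Section Avoidance.
Variables (n : nat) (I : finType) (A B : pred I) (h z : I -> 'cV[R]_n).

Lemma perturb_direction_fun (D0 : 'rV[R]_n) :
  (forall i, A i -> pairing D0 (h i) < 0) -> (forall i, B i -> z i != 0) ->
  exists D, (forall i, A i -> pairing D (h i) < 0) /\
            (forall i, B i -> pairing D (z i) != 0).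
Proof.
move=> hA zB.
suff [D [DA Dr]] : exists D, (forall i, A i -> pairing D (h i) < 0) /\
    forall i, i \in enum I -> B i -> pairing D (z i) != 0.
  by exists D; split=> // i; apply: Dr; rewrite mem_enum.
elim: (enum I) => [|i r [D1 [D1A D1r]]]; first by exists D0.
have [Bi_zero|ok] := boolP (B i && (pairing D1 (z i) == 0)); last first.
  exists D1; split=> // j; rewrite inE => /orP[/eqP -> Bi|]; last exact: D1r.
  by move: ok; rewrite Bi.
case/andP: Bi_zero => Bi /eqP D1zi.
pose w := (z i)^T.
have [e1 e1_gt0 He1] := exists_small_pos (fun j => pairing D1 (h j)) (fun j => pairing w (h j)).
have [e2 e2_gt0 He2] := exists_small_pos (fun j => pairing D1 (z j)) (fun j => pairing w (z j)).
pose e := Num.min e1 e2.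
have e_gt0 : 0 < e by rewrite lt_min e1_gt0.
have small (e' : R) (y : R) : 0 < e' -> e <= e' -> `|e * y| <= e' * `|y|.
  by move=> ? ?; rewrite normrM gtr0_norm // ler_wpM2r.
exists (D1 + e *: w); split=> [j Aj|j].
  rewrite pairingDl pairingZl; apply: addr_small_lt0; first exact: D1A.
  apply: le_lt_trans (small _ _ e1_gt0 _) (He1 _ _); first by rewrite ge_min lexx.
  by rewrite lt_eqF ?D1A.
rewrite inE pairingDl pairingZl => /orP[/eqP -> _|jr Bj].
  by rewrite D1zi add0r mulf_neq0 ?gt_eqF ?pairing_tr_gt0 ?zB.
apply: addr_small_neq0; apply: le_lt_trans (small _ _ e2_gt0 _) (He2 _ _).
  by rewrite ge_min lexx orbT.
exact: D1r.
Qed.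

End Avoidance.

Lemma perturb_direction (n : nat) (I C : finType) (A B : pred I)
    (h z : I -> C -> 'cV[R]_n) (D0 : 'rV[R]_n) :
  (forall i, A i -> exists k, pairing D0 (h i k) < 0) ->
  (forall i, B i -> exists k, z i k != 0) ->
  exists D, (forall i, A i -> exists k, pairing D (h i k) < 0) /\
            (forall i, B i -> exists k, pairing D (z i k) != 0).
Proof.
move=> hA zB.
pose h' i := if [pick k | pairing D0 (h i k) < 0] is Some k then h i k else 0.
pose z' i := if [pick k | z i k != 0] is Some k then z i k else 0.
have [||D [DA DB]] := @perturb_direction_fun n I A B h' z' D0.
- move=> i /hA [k hk]; rewrite /h'; case: pickP => [//|/(_ k)]; by rewrite hk.
- move=> i /zB [k zk]; rewrite /z'; case: pickP => [//|/(_ k)]; by rewrite zk.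
exists D; split=> i Ci.
  by move: (DA i Ci); rewrite /h'; case: pickP => [k _|_]; [exists k|rewrite pairing0r ltxx].
by move: (DB i Ci); rewrite /z'; case: pickP => [k _|_]; [exists k|rewrite pairing0r eqxx].
Qed.

End Perturbation.

(** * Every vertex of a star-shaped sphere lies in a facet *)

Section StarShapedSphere.
Variables (m n : nat) (K : {set {set 'I_m}}) (x : 'I_m -> 'I_n -> R) (p : 'I_n -> R).

Definition vertex_pt (i : 'I_m) : 'rV[R]_n := \row_k x i k.
Definition center : 'rV[R]_n := \row_k p k.
Local Notation X := vertex_pt.
Local Notation P := center.

Definition in_simplex (s : {set 'I_m}) (Y : 'rV[R]_n) : Prop :=
  exists c : 'I_m -> R, [/\ forall i, 0 <= c i, forall i, i \notin s -> c i = 0,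
    \sum_i c i = 1 & Y = P + \sum_i c i *: (X i - P)].

Definition in_body (Y : 'rV[R]_n) : Prop := exists2 s, s \in K & in_simplex s Y.

Lemma centered_sum (c : 'I_m -> R) : \sum_i c i = 1 ->
  P + \sum_i c i *: (X i - P) = \sum_i c i *: X i.
Proof.
move=> c1; under eq_bigr do rewrite scalerBr.
by rewrite sumrB -scaler_suml c1 scale1r addrC subrK.
Qed.

Lemma in_hull_simplex s (y : 'I_n -> R) : in_hull x s y <-> in_simplex s (\row_k y k).
Proof.
split=> [[c [c_ge0 [c_out [c1 cy]]]]|[c [c_ge0 c_out c1 cy]]]; exists c.
  split=> // [i|]; first exact/RleP.
  rewrite centered_sum //; apply/rowP => k; rewrite summxE !mxE cy.
  by apply: eq_bigr => i _; rewrite !mxE.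
split=> [i|]; first exact/RleP.
do 2!split=> //; move=> k; have := congr1 (fun M : 'rV[R]_n => M 0 k) cy.
by rewrite centered_sum // summxE !mxE => ->; apply: eq_bigr => i _; rewrite !mxE.
Qed.

Lemma in_polyhedron_body (y : 'I_n -> R) :
  in_polyhedron K x y <-> in_body (\row_k y k).
Proof.
by split=> [[s [sK /in_hull_simplex hs]]|[s sK /in_hull_simplex hs]]; exists s.
Qed.

Hypothesis HK : simplicial_complex K.
Hypothesis Hgr : geom_realization K x.
Hypothesis Hray : forall d : 'I_n -> R, (exists k, d k <> R0) ->
  exists t : R, (Rle R0 t /\ in_polyhedron K x (fun k => Rplus (p k) (Rmult t (d k)))) /\
    forall t', Rle R0 t' ->
      in_polyhedron K x (fun k => Rplus (p k) (Rmult t' (d k))) -> t' = t.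

Lemma row_entries (Y : 'rV[R]_n) : \row_k Y 0 k = Y.
Proof. by apply/rowP => k; rewrite mxE. Qed.

Lemma in_simplexI s t Y : s \in K -> t \in K ->
  in_simplex s Y -> in_simplex t Y -> in_simplex (s :&: t) Y.
Proof.
move=> sK tK; rewrite -(row_entries Y) -!in_hull_simplex; exact: Hgr.2.
Qed.

Lemma ray_meets_body_once (D : 'rV[R]_n) : D != 0 ->
  exists t, [/\ 0 <= t, in_body (P + t *: D) &
                forall t', 0 <= t' -> in_body (P + t' *: D) -> t' = t].
Proof.
move=> D0.
have rayE t : P + t *: D = \row_k Rplus (p k) (Rmult t (D 0 k)).
  by apply/rowP => k; rewrite !mxE.
have [|t [[/RleP t_ge0 tK] t_uniq]] := Hray (d := fun k => D 0 k).
  by case/rV0Pn: D0 => k /eqP; exists k.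
exists t; split=> [//||t' /RleP t'_ge0]; rewrite rayE -in_polyhedron_body //.
exact: t_uniq.
Qed.

Lemma in_simplex0 Y : ~ in_simplex set0 Y.
Proof.
move=> [c [_ c_out c1 _]]; move: c1; rewrite big1 => [/eqP|i _].
  by rewrite eq_sym oner_eq0.
by rewrite c_out ?inE.
Qed.

Lemma in_simplex_vertex u : in_simplex [set u] (X u).
Proof.
exists (fun i => (i == u)%:R); split.
- by move=> i; case: eqP.
- by move=> i; rewrite inE => /negbTE ->.
- by rewrite (bigD1 u) //= eqxx big1 ?addr0 // => i /negbTE ->.
- rewrite (bigD1 u) //= eqxx scale1r big1 => [|i /negbTE ->]; last by rewrite scale0r.
  by rewrite addr0 addrC subrK.
Qed.

Lemma in_body_vertex u : in_body (X u).
Proof. by exists [set u]; [exact: HK.2|exact: in_simplex_vertex]. Qed.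

Lemma vertex_in_simplex_mem s u : s \in K -> in_simplex s (X u) -> u \in s.
Proof.
move=> sK /(in_simplexI sK (HK.2 u)) /(_ (in_simplex_vertex u)).
apply: contraPT => us; suff -> : s :&: [set u] = set0 by apply: in_simplex0.
by apply/setP => i; rewrite !inE; apply/andP => -[i_s /eqP iu]; rewrite -iu i_s in us.
Qed.

Lemma center_in_body_vertex_eq : in_body P -> forall u w : 'I_m, u = w.
Proof.
move=> PK.
have X_eq_P u : X u = P.
  apply/eqP; rewrite -subr_eq0; apply/negP => /negP XuP.
  have [t [_ _ t_uniq]] := ray_meets_body_once XuP.
  have := t_uniq 1 ler01; rewrite scale1r addrC subrK => /(_ (in_body_vertex u)).
  by have := t_uniq 0 (lexx 0); rewrite scale0r addr0 => /(_ PK) <- /eqP; rewrite oner_eq0.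
move=> u w; apply/set1P; apply: vertex_in_simplex_mem (HK.2 w) _.
by rewrite X_eq_P -(X_eq_P w); apply: in_simplex_vertex.
Qed.

Variable v : 'I_m.

Definition face_vertex (s : {set 'I_m}) (k : nat) : 'I_m := nth v (enum s) k.

(* The k-th row of [face_mx s] is X - P at the k-th vertex of s, and the rows
   past #|s| are zero; [v] only serves as the default of [nth]. *)
Definition face_mx (s : {set 'I_m}) : 'M[R]_n :=
  \matrix_k (if (k < #|s|)%N then X (face_vertex s k) - P else 0).

Definition face_coef (s : {set 'I_m}) (c : 'I_m -> R) : 'rV[R]_n :=
  \row_k (if (k < #|s|)%N then c (face_vertex s k) else 0).

Section FaceCoordinates.
Variables (s : {set 'I_m}) (c : 'I_m -> R).
Hypotheses (s_le_n : (#|s| <= n)%N) (c_out : forall i, i \notin s -> c i = 0).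

Lemma sum_face (V : zmodType) (F : 'I_m -> V) : (forall i, i \notin s -> F i = 0) ->
  \sum_i F i = \sum_(k < n) (if (k < #|s|)%N then F (face_vertex s k) else 0).
Proof.
move=> F_out; rewrite (bigID (mem s)) /= [X in _ + X]big1 ?addr0; last by move=> i /F_out.
rewrite -big_enum (big_nth v) big_mkord -cardE.
by rewrite (big_ord_widen n (fun k => F (face_vertex s k))) // big_mkcond.
Qed.

Lemma face_coef_mulmx : face_coef s c *m face_mx s = \sum_i c i *: (X i - P).
Proof.
rewrite (sum_face (F := fun i => c i *: (X i - P))); last by move=> i /c_out ->; rewrite scale0r.
rewrite mulmx_sum_row; apply: eq_bigr => k _; rewrite rowK !mxE.
by case: ifP; rewrite ?scale0r.
Qed.

Lemma sum_face_coef : \sum_k face_coef s c 0 k = \sum_i c i.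
Proof. by rewrite (sum_face c_out); apply: eq_bigr => k _; rewrite mxE. Qed.

End FaceCoordinates.

Lemma card_face_unitmx (s : {set 'I_m}) : (#|s| <= n)%N -> face_mx s \in unitmx -> #|s| = n.
Proof.
rewrite leq_eqVlt => /orP[/eqP //|s_lt_n] unitG.
have : row (Ordinal s_lt_n) (face_mx s) = 0 by apply/rowP => j; rewrite !mxE ltnn mxE.
move/(congr1 (mulmx^~ (invmx (face_mx s)))); rewrite rowE -mulmxA mulmxV // mulmx1 mul0mx.
by move/rowP/(_ (Ordinal s_lt_n))/eqP; rewrite !mxE (eqxx (Ordinal s_lt_n)) oner_eq0.
Qed.

Hypothesis Hdim : has_dim K n.

Lemma in_simplex_face_mx (s : {set 'I_m}) Y : s \in K -> in_simplex s Y ->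
  exists2 l : 'rV[R]_n, (forall k, 0 <= l 0 k) & Y = P + l *m face_mx s.
Proof.
move=> sK [c [c_ge0 c_out _ ->]]; exists (face_coef s c).
  by move=> k; rewrite mxE; case: ifP.
by rewrite face_coef_mulmx // Hdim.2.
Qed.

Lemma face_mx_in_simplex (s : {set 'I_m}) (l : 'rV[R]_n) : #|s| = n ->
  (forall k, 0 <= l 0 k) -> \sum_k l 0 k = 1 -> in_simplex s (P + l *m face_mx s).
Proof.
move=> s_n l_ge0 l1.
pose c i := \sum_(k < n | (k : nat) == index i (enum s)) l 0 k.
have c_out i : i \notin s -> c i = 0.
  move=> i_s; rewrite /c big_pred0 // => k; rewrite memNindex ?mem_enum //.
  by rewrite -cardE s_n ltn_eqF.
have lE : face_coef s c = l.
  apply/rowP => k; rewrite !mxE s_n ltn_ord /c (big_pred1 k) // => k'.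
  rewrite index_uniq ?enum_uniq ?[_ \in _]andbT //; last by rewrite -cardE s_n.
exists c; split=> // [i||]; first by apply: sumr_ge0.
  by rewrite -(sum_face_coef (s := s)) ?s_n // lE.
by rewrite -lE (face_coef_mulmx (s := s)) ?s_n.
Qed.

Lemma dim_gt0 : (0 < n)%N.
Proof. by have := Hdim.2 _ (HK.2 v); rewrite cards1. Qed.

Section VertexWithoutFacet.
Hypothesis v_no_facet : forall s, s \in K -> v \in s -> #|s| != n.

Lemma center_notin_body : ~ in_body P.
Proof.
move=> PK; have [S [SK S_n]] := Hdim.1.
have /set0Pn [w wS] : S != set0 by rewrite -card_gt0 S_n dim_gt0.
move: wS; rewrite (center_in_body_vertex_eq PK w v) => vS.
by move: (v_no_facet SK vS); rewrite S_n eqxx.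
Qed.

Lemma vertex_dir_neq0 : X v - P != 0.
Proof.
apply/eqP => /eqP; rewrite subr_eq0 => /eqP XvP.
by apply: center_notin_body; rewrite -XvP; apply: in_body_vertex.
Qed.

Lemma vertex_ray_at_1 t : 0 <= t -> in_body (P + t *: (X v - P)) -> t = 1.
Proof.
have [t0 [_ _ t0_uniq]] := ray_meets_body_once vertex_dir_neq0.
move=> t_ge0 /(t0_uniq _ t_ge0) ->; apply: esym; apply: t0_uniq; first exact: ler01.
by rewrite scale1r addrC subrK; apply: in_body_vertex.
Qed.

(* Otherwise [X v - P] lies in the cone over the facet s, so the ray from P
   towards X v would meet s, forcing v \in s. *)
Lemma unit_face_neg_coord s : s \in K -> face_mx s \in unitmx ->
  exists k, ((X v - P) *m invmx (face_mx s)) 0 k < 0.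
Proof.
move=> sK unitG; have s_n := card_face_unitmx (Hdim.2 _ sK) unitG.
have [/existsP //|] := boolP [exists k, ((X v - P) *m invmx (face_mx s)) 0 k < 0].
rewrite negb_exists => /forallP l_nneg.
set l := (X v - P) *m invmx (face_mx s) in l_nneg.
have l_ge0 k : 0 <= l 0 k by rewrite leNgt l_nneg.
have lG : l *m face_mx s = X v - P by rewrite /l -mulmxA mulVmx // mulmx1.
pose L := \sum_k l 0 k.
have L_gt0 : 0 < L.
  rewrite lt_def sumr_ge0 // andbT; apply: contraNneq vertex_dir_neq0.
  move=> /(psumr_eq0P (fun k _ => l_ge0 k)) l0; rewrite -lG.
  by rewrite (_ : l = 0) ?mul0mx //; apply/rowP => k; rewrite l0 ?mxE.
have := @face_mx_in_simplex s (L^-1 *: l) s_n.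
rewrite -scalemxAl lG => /(_ _ _) hs.
have {}hs : in_simplex s (P + L^-1 *: (X v - P)).
  apply: hs => [k|]; first by rewrite mxE mulr_ge0 // invr_ge0 ltW.
  by under eq_bigr do rewrite mxE; rewrite -mulr_sumr mulVf // gt_eqF.
have L1 : L^-1 = 1 by apply: vertex_ray_at_1; [rewrite invr_ge0 ltW|exists s].
move: hs; rewrite L1 scale1r addrC subrK => /(vertex_in_simplex_mem sK) vs.
by move: (v_no_facet sK vs); rewrite s_n eqxx.
Qed.

Lemma ray_in_face_cone (D : 'rV[R]_n) : D != 0 -> exists s t (l : 'rV[R]_n),
  [/\ s \in K, 0 < t, forall k, 0 <= l 0 k & t *: D = l *m face_mx s].
Proof.
move=> D0; have [t [t_ge0 [s sK hs] _]] := ray_meets_body_once D0.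
have [l l_ge0 lE] := in_simplex_face_mx sK hs.
exists s, t, l; split=> //; last exact: (addrI P).
rewrite lt_def t_ge0 andbT; apply/eqP => t0; apply: center_notin_body.
by exists s; rewrite // -[P]addr0 -(scale0r D) -t0.
Qed.

(* Perturb X v - P into a direction D that keeps a negative coordinate in the
   basis of every invertible [face_mx s] and leaves the row space of every
   singular one; the ray in direction D must meet some simplex s of K, so D
   lies in the cone over s, which is impossible either way. *)
Lemma vertex_without_facet_false : False.
Proof.
pose unitK := [pred s | (s \in K) && (face_mx s \in unitmx)].
pose singK := [pred s | (s \in K) && (face_mx s \notin unitmx)].
have [||D [D_neg D_nz]] := perturb_direction (A := unitK) (B := singK)
    (h := fun s k => invmx (face_mx s) *m delta_mx k 0)
    (z := fun s => ker_col (face_mx s)) (D0 := X v - P).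
- move=> s /andP[sK unitG]; have [k k_neg] := unit_face_neg_coord sK unitG.
  by exists k; rewrite /pairing mulmxA -colE mxE.
- by move=> s /andP[_]; apply: nonunitmx_ker_col.
have D0 : D != 0.
  have sing0 : singK set0.
    rewrite /= (HK.1 _ set0 (HK.2 v)) ?sub0set //=; apply/negP => /card_face_unitmx.
    by rewrite cards0 => /(_ isT) n0; move: dim_gt0; rewrite -n0.
  by have [k] := D_nz _ sing0; apply: contraNneq => ->; rewrite pairing0l.
have [s [t [l [sK t_gt0 l_ge0 tD]]]] := ray_in_face_cone D0.
have tDE f : t * pairing D f = pairing l (face_mx s *m f).
  by rewrite -pairingZl tD /pairing mulmxA.
have [unitG|singG] := boolP (face_mx s \in unitmx).
  have [k] := D_neg s (introT andP (conj sK unitG)).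
  have := tDE (invmx (face_mx s) *m delta_mx k 0).
  by rewrite mulmxA mulmxV // mul1mx pairing_delta => E; have := l_ge0 k; nra.
have [k] := D_nz s (introT andP (conj sK singG)).
have := tDE (ker_col (face_mx s) k).
rewrite mulmx_ker_col pairing0r => /eqP.
by rewrite mulf_eq0 gt_eqF //= => /eqP ->; rewrite eqxx.
Qed.

End VertexWithoutFacet.

Lemma vertex_in_facet : exists F, [/\ F \in K, v \in F & #|F| = n].
Proof.
have [/existsP [F /and3P [FK vF /eqP F_n]]|] :=
  boolP [exists F : {set 'I_m}, [&& F \in K, v \in F & #|F| == n]]; first by exists F.
rewrite negb_exists => /forallP no_facet; exfalso.
by apply: vertex_without_facet_false => s sK vs; have := no_facet s; rewrite sK vs.
Qed.

End StarShapedSphere.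

Lemma star_shaped_sphere_facet (m n : nat) (K : {set {set 'I_m}}) :
  simplicial_complex K -> has_dim K n -> star_shaped_sphere n K ->
  forall v, exists F, [/\ F \in K, v \in F & #|F| = n].
Proof. by move=> HK Hdim [x [p [Hgr Hray]]] v; exact: (vertex_in_facet HK Hgr Hray v Hdim). Qed.

(** * Quotient maps and the exchange of two vertices *)

Section QuotientMaps.
Variables (V : finType) (Rg : comUnitRingType) (N n : nat) (Lam : V -> 'rV[Rg]_N).

Definition kills_exactly (s : pred V) (phi : 'M[Rg]_(N, n)) : Prop :=
  forall x : 'rV[Rg]_N,
    x *m phi = 0 <-> exists cf : V -> Rg, x = \sum_(u | s u) cf u *: Lam u.

Definition quotient_class (s : pred V) (m : nat) (io : 'I_m -> V)
    (mu : 'I_m -> 'rV[Rg]_n) : Prop :=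
  exists phi : 'M[Rg]_(N, n),
    kills_exactly s phi /\ (forall y : 'rV[Rg]_n, exists x, x *m phi = y) /\
    (forall i, mu i = Lam (io i) *m phi).

Lemma kills_exactly_vanish s phi u : kills_exactly s phi -> s u -> Lam u *m phi = 0.
Proof.
move=> phi_s su; apply/phi_s; exists (fun w => (w == u)%:R).
rewrite (bigD1 u) //= eqxx scale1r big1 ?addr0 // => w /andP[_ /negbTE ->].
by rewrite scale0r.
Qed.

Definition swap_functional (A B : V) (f : 'cV[Rg]_N) : Prop :=
  [/\ pairing (Lam A) f = 1, pairing (Lam B) f = -1 &
      forall u, u != A -> u != B -> pairing (Lam u) f = 0].

Lemma swap_functionalN A B f : swap_functional A B f -> swap_functional B A (- f).
Proof.
case=> fA fB f0; split; rewrite ?pairingNr ?fA ?fB ?opprK //.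
by move=> u uB uA; rewrite pairingNr f0 ?oppr0.
Qed.

Section Swap.
Variables (A B : V) (f : 'cV[Rg]_N) (s1 s2 : pred V) (m : nat) (i1 i2 : 'I_m -> V) (v : 'I_m).
Hypotheses (fAB : swap_functional A B f) (s1A : ~~ s1 A) (s1B : s1 B) (s2A : s2 A) (s2B : ~~ s2 B).
Hypothesis s12 : forall u, u != A -> u != B -> s1 u = s2 u.
Hypotheses (i1v : i1 v = A) (i2v : i2 v = B).
Hypothesis i12 : forall i, i != v -> i1 i = i2 i /\ pairing (Lam (i1 i)) f = 0.

(* The new map agrees with phi on the kernel of f, kills Lam A, and sends
   Lam B to the old image of Lam A. *)
Lemma swap_kills_exactly phi : kills_exactly s1 phi ->
  kills_exactly s2 (phi - f *m (Lam A *m phi)).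
Proof.
move=> phi_s1; case: fAB => fA fB f0.
have phi'E x : x *m (phi - f *m (Lam A *m phi)) = x *m phi - pairing x f *: (Lam A *m phi).
  by rewrite mulmxBr mulmx_pairing.
move=> x; split=> [x0|[cf ->]].
  pose x' := x - pairing x f *: Lam A.
  have /phi_s1 [cf x'E] : x' *m phi = 0 by rewrite mulmxBl -scalemxAl -phi'E.
  have cfB : cf B = 0.
    have : pairing x' f = 0 by rewrite pairingBl pairingZl fA mulr1 subrr.
    rewrite x'E pairing_suml (bigD1 B) //= big1 ?addr0 => [|u /andP[s1u uB]].
      by rewrite pairingZl fB mulrN1 => /eqP; rewrite oppr_eq0 => /eqP.
    by rewrite pairingZl f0 ?mulr0 //; apply: contraTneq s1u => ->.
  exists (fun u => if u == A then pairing x f else cf u).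
  have xE : x = x' + pairing x f *: Lam A by rewrite subrK.
  rewrite {1}xE x'E (bigD1 B) //= cfB scale0r add0r.
  rewrite [RHS](bigD1 A) //= eqxx [RHS]addrC; congr (_ + _).
  apply: eq_big => [u|u /andP[s1u _]]; last first.
    by have [uA|//] := eqVneq u A; rewrite uA (negbTE s1A) in s1u.
  have [->|uA] := eqVneq u A; first by rewrite (negbTE s1A) s2A.
  have [->|uB] := eqVneq u B; first by rewrite s1B (negbTE s2B).
  by rewrite s12 // andbT.
rewrite mulmx_suml big1 // => u s2u; rewrite -scalemxAl phi'E.
have [->|uA] := eqVneq u A; first by rewrite fA scale1r subrr scaler0.
have [uB|uB] := eqVneq u B; first by move: s2B; rewrite -uB s2u.
by rewrite f0 // scale0r subr0 (kills_exactly_vanish phi_s1) ?s12 ?scaler0.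
Qed.

Lemma quotient_class_swap mu : quotient_class s1 i1 mu -> quotient_class s2 i2 mu.
Proof.
case=> phi [phi_s1 [phi_onto muE]]; case: fAB => fA fB f0.
have phi'E x : x *m (phi - f *m (Lam A *m phi)) = x *m phi - pairing x f *: (Lam A *m phi).
  by rewrite mulmxBr mulmx_pairing.
have BA : Lam B *m (phi - f *m (Lam A *m phi)) = Lam A *m phi.
  by rewrite phi'E (kills_exactly_vanish phi_s1 s1B) fB scaleN1r sub0r opprK.
exists (phi - f *m (Lam A *m phi)); split; first exact: swap_kills_exactly.
split=> [y|i]; first have [x <-] := phi_onto y.
  by exists (x + pairing x f *: Lam B); rewrite mulmxDl -scalemxAl BA phi'E subrK.
have [->|iv] := eqVneq i v; first by rewrite muE i1v i2v BA.
by have [<- fi] := i12 iv; rewrite muE phi'E fi scale0r subr0.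
Qed.

End Swap.

Lemma swap_functional_of_classes (A B : V) (s1 s2 : pred V) (m : nat)
    (i1 i2 : 'I_m -> V) (v : 'I_m) (phi : 'M[Rg]_(N, n)) (g : 'cV[Rg]_n) mu :
  s1 B -> s2 A -> i1 v = A -> i2 v = B ->
  (forall u, u != A -> u != B -> s1 u && s2 u \/ exists2 i, u = i1 i & i2 i = u) ->
  kills_exactly s1 phi -> (forall i, mu i = Lam (i1 i) *m phi) ->
  pairing (mu v) g = 1 -> quotient_class s2 i2 mu ->
  exists f, swap_functional A B f.
Proof.
move=> s1B s2A i1v i2v others phi_s1 muE mu_g [phi' [phi'_s2 [_ muE']]].
exists ((phi - phi') *m g).
have fE x : pairing x ((phi - phi') *m g) = pairing (x *m phi) g - pairing (x *m phi') g.
  by rewrite pairing_mulmx mulmxBr pairingBl.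
have A0 := kills_exactly_vanish phi'_s2 s2A; have B0 := kills_exactly_vanish phi_s1 s1B.
split=> [||u uA uB]; rewrite fE.
- by rewrite A0 -i1v -(muE v) mu_g pairing0l subr0.
- by rewrite B0 -i2v -(muE' v) mu_g pairing0l sub0r.
case: (others u uA uB) => [/andP[s1u s2u]|[i -> i21]].
  by rewrite (kills_exactly_vanish phi_s1 s1u) (kills_exactly_vanish phi'_s2 s2u) subrr.
by rewrite -(muE i) -i21 -(muE' i) subrr.
Qed.

Section BasisQuotient.
Variables (s : pred V) (e : 'I_N -> V) (h : 'I_n -> V).
Hypotheses (e_inj : injective e) (h_inj : injective h).
Hypothesis e_basis : (\matrix_(j < N) Lam (e j)) \in unitmx.
Hypothesis e_range : forall u, (exists j, e j = u) <-> s u \/ exists k, h k = u.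
Hypothesis s_h : forall k, ~~ s (h k).

Let E := \matrix_(j < N) Lam (e j).
Let Sel : 'M[Rg]_(N, n) := \matrix_(j, k) (e j == h k)%:R.
Let phi := invmx E *m Sel.

Lemma basis_coordsE (x : 'rV[Rg]_N) : x = \sum_j (x *m invmx E) 0 j *: Lam (e j).
Proof.
rewrite -{1}(mulmx1 x) -(mulVmx e_basis) mulmxA mulmx_sum_row.
by apply: eq_bigr => j _; rewrite rowK.
Qed.

Lemma mul_basis_phi j : Lam (e j) *m phi = row j Sel.
Proof. by rewrite mulmxA -[Lam (e j)](rowK (fun j => Lam (e j))) -row_mul mulmxV // row1 -rowE. Qed.

Lemma mul_sigma_phi u : s u -> Lam u *m phi = 0.
Proof.
move=> su; have [j eju] := (e_range u).2 (or_introl su); subst u.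
rewrite mul_basis_phi; apply/rowP => k; rewrite !mxE.
by have [ejhk|//] := eqVneq (e j) (h k); move: (s_h k); rewrite -ejhk su.
Qed.

Lemma mul_h_phi k : Lam (h k) *m phi = 'e_k.
Proof.
have [j ej] := (e_range (h k)).2 (or_intror (ex_intro _ k erefl)).
rewrite -ej mul_basis_phi; apply/rowP => k'; rewrite !mxE ej eqxx /=.
by rewrite (inj_eq h_inj) eq_sym.
Qed.

Lemma coord_h_phi (x : 'rV[Rg]_N) j k : e j = h k -> (x *m invmx E) 0 j = (x *m phi) 0 k.
Proof.
move=> ejhk.
have SelE j' : Sel j' k = (e j' == e j)%:R by rewrite mxE ejhk.
rewrite /phi mulmxA [RHS]mxE (bigD1 j) //= SelE eqxx mulr1 big1 ?addr0 // => j' j'j.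
by rewrite SelE (inj_eq e_inj) (negbTE j'j) mulr0.
Qed.

Lemma kills_exactly_basis : kills_exactly s phi.
Proof.
move=> x; split=> [x0|[cf ->]]; last first.
  by rewrite mulmx_suml big1 // => u su; rewrite -scalemxAl mul_sigma_phi ?scaler0.
set c := x *m invmx E.
exists (fun u => \sum_(j | e j == u) c 0 j).
rewrite {1}(basis_coordsE x) -/c; under [RHS]eq_bigr do rewrite scaler_suml.
rewrite (exchange_big_dep predT) //=; apply: eq_bigr => j _.
have [sej|nsej] := boolP (s (e j)).
  rewrite (big_pred1 (e j)) // => u.
  by rewrite /= eq_sym; have [->|] := eqVneq u (e j); rewrite ?sej ?andbF.
rewrite big_pred0 => [|u]; last by apply/andP => -[su /eqP eju]; rewrite eju su in nsej.
have [|[k hkej]] := (e_range (e j)).1 (ex_intro _ j erefl); first by rewrite (negbTE nsej).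
by rewrite /c (coord_h_phi _ (esym hkej)) x0 mxE scale0r.
Qed.

Lemma quotient_of_basis : exists phi : 'M[Rg]_(N, n),
  kills_exactly s phi /\ (forall y : 'rV[Rg]_n, exists x, x *m phi = y) /\
  (forall k, Lam (h k) *m phi = 'e_k).
Proof.
exists phi; split; first exact: kills_exactly_basis.
split=> [y|]; last exact: mul_h_phi.
exists (\sum_k y 0 k *: Lam (h k)).
rewrite mulmx_suml -[RHS](mulmx1 y) mulmx_sum_row; apply: eq_bigr => k _.
by rewrite -scalemxAl mul_h_phi row1.
Qed.

End BasisQuotient.

End QuotientMaps.

(** * Parallel edges of a realizable puzzle *)

Section WedgePuzzle.
Variables (c : coef) (m n : nat) (K : {set {set 'I_m}}) (J : 'I_m -> nat).
Hypothesis HK : simplicial_complex K.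
Hypothesis HJ : forall i, (0 < J i)%N.

Local Notation vtx k := (Tagged (fun i => 'I_(J i)) k).

Lemma iota_inj (al : IJ J) : injective (Defs.iota al).
Proof. by move=> i j /(congr1 tag). Qed.

Lemma iota_notin_sigma (al : IJ J) u : ~~ in_sigma al u -> Defs.iota al (tag u) = u.
Proof. by case: u => i k /negbNE /eqP /= ->. Qed.

(* sigma(alpha) together with the copies i_{alpha_i} of the vertices of F:
   the face of K(J) over the face F of link sigma(alpha) = K. *)
Definition lift_face (al : IJ J) (F : {set 'I_m}) : {set VJ J} :=
  [set u | in_sigma al u || (tag u \in F)].

Lemma lift_face_KJ (al : IJ J) (F : {set 'I_m}) : F \in K -> KJ_face K (lift_face al F).
Proof.
move=> FK t [tK _] /subsetP t_sub.
have /subsetPn [i it iF] : ~~ (t \subset F) by apply: contra tK => /(HK.1 _ _ FK).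
have : Defs.iota al i \in lift_face al F by apply: t_sub; rewrite inE.
by rewrite inE /in_sigma /= eqxx (negbTE iF).
Qed.

Lemma card_lift_face (al : IJ J) (F : {set 'I_m}) : #|F| = n -> #|lift_face al F| = NJ n J.
Proof.
move=> F_n.
have compl : ~: lift_face al F = Defs.iota al @: ~: F.
  apply/setP => u; rewrite !inE negb_or; apply/andP/imsetP => [[nsu uF]|[i iF ->]].
    by exists (tag u); rewrite ?inE // iota_notin_sigma.
  by rewrite /in_sigma /= eqxx; rewrite inE in iF.
have card_compl : #|~: lift_face al F| = (m - n)%N.
  by rewrite compl card_imset => [|?? /iota_inj //]; rewrite cardsCs setCK card_ord F_n.
have card_VJ : #|{: VJ J}| = (\sum_(i < m) (J i).-1 + m)%N.
  rewrite card_tagged sumnE big_map big_enum /=.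
  rewrite -[X in (_ + X)%N](card_ord m) -sum1_card -big_split /=.
  by apply: eq_bigr => i _; rewrite card_ord addn1 prednK.
have n_le_m : (n <= m)%N by rewrite -F_n; apply: leq_trans (max_card F) _; rewrite card_ord.
by have := cardsC (lift_face al F); rewrite card_compl card_VJ /NJ; lia.
Qed.

Variables (Lam : VJ J -> 'rV[coefR c]_(NJ n J)) (v : 'I_m).
Hypothesis HLam : char_map (KJ_face K (J:=J)) Lam.

Lemma lift_face_quotient (al : IJ J) (F : {set 'I_m}) : F \in K -> v \in F -> #|F| = n ->
  exists phi : 'M_(NJ n J, n), [/\ kills_exactly Lam (in_sigma al) phi,
    forall y : 'rV_n, exists x, x *m phi = y &
    exists g, pairing (Lam (Defs.iota al v) *m phi) g = 1].
Proof.
move=> FK vF F_n.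
have [e [e_inj [e_range e_unit]]] := HLam (lift_face_KJ (al := al) FK) (card_lift_face al F_n).
pose h k := Defs.iota al (enum_val (cast_ord (esym F_n) k)).
have h_inj : injective h by move=> k1 k2 /iota_inj /enum_val_inj /cast_ord_inj.
have e_range' u : (exists j, e j = u) <-> in_sigma al u \/ exists k, h k = u.
  rewrite -e_range inE; split=> [/orP[|uF]|[->|[k <-]]]; [by left| |by []|].
    have [|ns] := boolP (in_sigma al u); [by left|right].
    exists (cast_ord F_n (enum_rank_in uF (tag u))).
    by rewrite /h cast_ordK enum_rankK_in // iota_notin_sigma.
  by rewrite /h /= enum_valP orbT.
have [|phi [phi_ker [phi_onto h_phi]]] := quotient_of_basis e_inj h_inj e_unit e_range'.
  by move=> k; rewrite /in_sigma /= eqxx.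
pose k := cast_ord F_n (enum_rank_in vF v).
have hk : h k = Defs.iota al v by rewrite /h cast_ordK enum_rankK_in.
exists phi; split=> //; exists (delta_mx k 0).
by rewrite -hk h_phi pairing_delta mxE !eqxx.
Qed.

Section Edge.
Variables (a b : 'I_(J v)) (be be' : IJ J).
Hypotheses (ab : a != b) (be_v : be v = a) (be'_v : be' v = b).
Hypothesis be_be' : forall i, i <> v -> be i = be' i.

Lemma in_sigma_edge u : u != vtx a -> u != vtx b -> in_sigma be u = in_sigma be' u.
Proof.
case: u => i k; have [iv|iv] := eqVneq i v.
  subst i; by rewrite !eq_Tagged /in_sigma /= be_v be'_v => ka kb; rewrite ka kb.
by rewrite /in_sigma /= be_be' //; apply/eqP.
Qed.

Lemma iota_edge i : i != v -> Defs.iota be i = Defs.iota be' i.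
Proof. by move=> /eqP iv; rewrite /Defs.iota be_be'. Qed.

Lemma puzzle_edge_swap f mu : swap_functional Lam (vtx a) (vtx b) f ->
  puzzle Lam be mu -> puzzle Lam be' mu.
Proof.
move=> fab.
have s1A : ~~ in_sigma be (vtx a) by rewrite /in_sigma /= be_v eqxx.
have s1B : in_sigma be (vtx b) by rewrite /in_sigma /= be_v eq_sym.
have s2A : in_sigma be' (vtx a) by rewrite /in_sigma /= be'_v.
have s2B : ~~ in_sigma be' (vtx b) by rewrite /in_sigma /= be'_v eqxx.
have i1v : Defs.iota be v = vtx a by rewrite /Defs.iota be_v.
have i2v : Defs.iota be' v = vtx b by rewrite /Defs.iota be'_v.
apply: (quotient_class_swap fab s1A s1B s2A s2B in_sigma_edge i1v i2v) => i iv.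
split; first exact: iota_edge.
by case: fab => _ _; apply; apply: contra iv => /eqP/(congr1 tag) /= ->.
Qed.

Lemma edge_vertex_cases u : u != vtx a -> u != vtx b ->
  in_sigma be u && in_sigma be' u \/
  exists2 i, u = Defs.iota be i & Defs.iota be' i = u.
Proof.
move=> ua ub; rewrite -in_sigma_edge // andbb.
have [|nsu] := boolP (in_sigma be u); [by left|right; exists (tag u)].
  by rewrite iota_notin_sigma.
by rewrite iota_notin_sigma // -in_sigma_edge.
Qed.

End Edge.

Lemma trivial_edge_swap_functional (a b : 'I_(J v)) (al al' : IJ J) (F : {set 'I_m}) :
  F \in K -> v \in F -> #|F| = n -> a != b -> al v = a -> al' v = b ->
  (forall i, i <> v -> al i = al' i) -> puzzle Lam al = puzzle Lam al' ->
  exists f, swap_functional Lam (vtx a) (vtx b) f.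
Proof.
move=> FK vF F_n ab al_v al'_v al_al' triv.
have [phi [phi_ker phi_onto [g g1]]] := lift_face_quotient al FK vF F_n.
pose mu i := Lam (Defs.iota al i) *m phi.
have mu_al' : puzzle Lam al' mu by rewrite -triv; exists phi.
have s1B : in_sigma al (vtx b) by rewrite /in_sigma /= al_v eq_sym.
have s2A : in_sigma al' (vtx a) by rewrite /in_sigma /= al'_v.
have i1v : Defs.iota al v = vtx a by rewrite /Defs.iota al_v.
have i2v : Defs.iota al' v = vtx b by rewrite /Defs.iota al'_v.
have muE i : mu i = Lam (Defs.iota al i) *m phi by [].
apply: (swap_functional_of_classes s1B s2A i1v i2v _ phi_ker muE g1 mu_al').
exact: edge_vertex_cases.
Qed.

End WedgePuzzle.

Theorem mainTheorem7 (c : coef) (m n : nat) (K : {set {set 'I_m}})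
    (HK : simplicial_complex K) (Hdim : has_dim K n)
    (Hstar : star_shaped_sphere n K)
    (J : 'I_m -> nat) (HJ : forall i, (0 < J i)%N)
    (Lam : VJ J -> 'rV[coefR c]_(NJ n J))
    (HLam : char_map (KJ_face K (J:=J)) Lam)
    (v : 'I_m) (a b : 'I_(J v)) (Hab : a <> b)
    (al al' : IJ J) (Hal : al v = a) (Hal' : al' v = b)
    (Hoth : forall i, i <> v -> al i = al' i)
    (Htriv : puzzle Lam al = puzzle Lam al') :
  forall be be' : IJ J, be v = a -> be' v = b ->
    (forall i, i <> v -> be i = be' i) ->
    puzzle Lam be = puzzle Lam be'.
Proof.
move=> be be' be_v be'_v be_be'.
have ab : a != b by apply/eqP.
have [F [FK vF F_n]] := star_shaped_sphere_facet HK Hdim Hstar v.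
have [f fab] := trivial_edge_swap_functional HK HJ HLam FK vF F_n ab Hal Hal' Hoth Htriv.
apply: functional_extensionality => mu; apply: propositional_extensionality; split.
  exact: puzzle_edge_swap ab be_v be'_v be_be' f mu fab.
have ba : b != a by rewrite eq_sym.
have be'_be i : i <> v -> be' i = be i by move=> /be_be' ->.
exact: puzzle_edge_swap ba be'_v be_v be'_be _ mu (swap_functionalN fab).
Qed.
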